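(* Consider a cooperative multi-agent Markov decision process with $N$ agents, finite individual state space $\mathcal S$, finite individual action space $\mathcal A$, joint state space $\mathcal S^N$, joint action space $\mathcal A^N$, transition kernel $\mathbb P$, shared reward $\mathrm r$ and discount factor $\gamma\in(0,1)$, and suppose that for every $(\mathbf s_t,\mathbf a_t)\in\mathcal S^N\times\mathcal A^N$, every $\mathbf s_{t+1}\in\mathcal S^N$ and every permutation $\kappa$ of the agent indices, $$\mathrm r(\mathbf s_t,\mathbf a_t)=\mathrm r(\kappa(\mathbf s_t),\kappa(\mathbf a_t)),\qquad \mathbb P(\mathbf s_{t+1}\mid \mathbf s_t,\mathbf a_t)=\mathbb P(\kappa(\mathbf s_{t+1})\mid \kappa(\mathbf s_t),\kappa(\mathbf a_t)).$$ Then (i) there exists an optimal policy $\nu^*$ that is permutation invariant, i.e. $\nu^*(\mathbf s,\mathbf a)=\nu^*(\kappa(\mathbf s),\kappa(\mathbf a))$ for every permutation $\kappa$; and (ii) for every permutation invariant policy $\nu$, the value function and state-action value function are permutation invariant: $V^\nu(\mathbf s)=V^\nu(\kappa(\mathbf s))$ and $Q^\nu(\mathbf s,\mathbf a)=Q^\nu(\kappa(\mathbf s),\kappa(\mathbf a))$ for all $\mathbf s,\mathbf a$ and all permutations $\kappa$.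
   Context: A permutation $\kappa$ of $\{1,\dots,N\}$ acts on $\mathbf s=(s_1,\dots,s_N)$ and $\mathbf a=(a_1,\dots,a_N)$ by permuting coordinates (the same permutation applied to states and actions). A (joint) policy $\nu$ assigns to each joint state $\mathbf s$ a distribution $\nu(\cdot\mid\mathbf s)$ over $\mathcal A^N$; we write $\nu(\mathbf s,\mathbf a)=\nu(\mathbf a\mid \mathbf s)$. The value function is $V^\nu(\mathbf s)=(1-\gamma)\mathbb E\{\sum_{t\ge0}\gamma^t\mathrm r(\mathbf s_t,\mathbf a_t)\mid \mathbf s_0=\mathbf s,\ \mathbf a_t\sim\nu(\cdot\mid\mathbf s_t)\ \forall t\ge 0\}$, and $Q^\nu(\mathbf s,\mathbf a)=\mathbb E_{\mathbf s'\sim\mathbb P(\cdot\mid\mathbf s,\mathbf a)}\{\mathrm r(\mathbf s,\mathbf a)+\gamma V^\nu(\mathbf s')\}$. An optimal policy is one maximizing $V^\nu(\mathbf s)$ for all $\mathbf s$. *)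

From HB Require Import structures.
From mathcomp Require Import all_boot all_order all_algebra all_fingroup.
From mathcomp Require Import all_classical all_reals all_analysis.
Set Implicit Arguments. Unset Strict Implicit. Unset Printing Implicit Defensive.
Import Order.TTheory GRing.Theory Num.Theory.
Local Open Scope ring_scope.

Definition joint (N : nat) (T : finType) := {ffun 'I_N -> T}.

Definition pact (N : nat) (T : finType) (k : {perm 'I_N}) (x : joint N T)
  : joint N T := [ffun i => x (k i)].

Section MDP.
Variables (R : realType) (N : nat) (S A : finType).
Notation JS := (joint N S).
Notation JA := (joint N A).

Definition is_kernel (P : JS -> JA -> JS -> R) : Prop :=
  (forall s a s', 0 <= P s a s') /\ (forall s a, \sum_(s' : JS) P s a s' = 1).

Definition is_policy (nu : JS -> JA -> R) : Prop :=
  (forall s a, 0 <= nu s a) /\ (forall s, \sum_(a : JA) nu s a = 1).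

Definition perm_inv_policy (nu : JS -> JA -> R) : Prop :=
  forall (k : {perm 'I_N}) s a, nu s a = nu (pact k s) (pact k a).

Variables (P : JS -> JA -> JS -> R) (r : JS -> JA -> R) (gamma : R).

Fixpoint state_dist (nu : JS -> JA -> R) (s0 : JS) (t : nat) : JS -> R :=
  match t with
  | 0 => fun s => if s == s0 then 1 else 0
  | t'.+1 => fun s' =>
      \sum_(s : JS) \sum_(a : JA) state_dist nu s0 t' s * nu s a * P s a s'
  end.

Definition exp_reward (nu : JS -> JA -> R) (s0 : JS) (t : nat) : R :=
  \sum_(s : JS) \sum_(a : JA) state_dist nu s0 t s * nu s a * r s a.

Definition Vfun (nu : JS -> JA -> R) (s0 : JS) : R :=
  (1 - gamma) *
  limn (fun n => \sum_(0 <= t < n) gamma ^+ t * exp_reward nu s0 t).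

Definition Qfun (nu : JS -> JA -> R) (s : JS) (a : JA) : R :=
  \sum_(s' : JS) P s a s' * (r s a + gamma * Vfun nu s').

Definition optimal_policy (nu : JS -> JA -> R) : Prop :=
  is_policy nu /\
  forall nu', is_policy nu' -> forall s, Vfun nu' s <= Vfun nu s.

End MDP.

From HB Require Import structures.
From mathcomp Require Import all_boot all_order all_algebra all_fingroup.
From mathcomp Require Import all_classical all_reals all_analysis.
From mathcomp Require Import lra.
Import numFieldNormedType.Exports.
Import Order.TTheory GRing.Theory Num.Theory.
Local Open Scope classical_set_scope.
Local Open Scope ring_scope.
Set Implicit Arguments. Unset Strict Implicit. Unset Printing Implicit Defensive.

(* For a policy nu, the partial sums of the discounted return satisfy
   G_(n+1) = T_nu G_n for the policy-evaluation operator
   T_nu v (s) = sum_a nu(a|s) (r(s,a) + gamma sum_s' P(s'|s,a) v(s')).  Since T_nu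
   is monotone and shifts constants by a factor gamma, V^nu / (1 - gamma) is its
   unique fixed point, bounded above by any v with T_nu v <= v and below by any v
   with v <= T_nu v.
   A deterministic policy maximising sum_s V(s) yields a solution v of the Bellman
   optimality equation v(s) = max_a Q_v(s,a); it dominates every value, hence is
   the unique solution.  Invariance of r and P under kappa makes v o kappa a
   solution too, so v is permutation invariant, and the policy uniform on the
   maximising actions is optimal and permutation invariant.  Likewise, for an
   invariant nu, V^nu o kappa is a fixed point of T_nu, so V^nu is invariant. *)

Lemma pactK (N : nat) (T : finType) (k : {perm 'I_N}) :
  cancel (@pact N T k) (pact k^-1).
Proof. by move=> x; apply/ffunP => i; rewrite !ffunE permKV. Qed.

Lemma pactKV (N : nat) (T : finType) (k : {perm 'I_N}) :
  cancel (@pact N T k^-1) (pact k).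
Proof. by move=> x; apply/ffunP => i; rewrite !ffunE permK. Qed.

Lemma norm_le_sum_norm (R : numDomainType) (T : finType) (f : T -> R) x :
  `|f x| <= \sum_y `|f y|.
Proof. by rewrite (bigD1 x) //= lerDl sumr_ge0. Qed.

Lemma norm_convex_comb_le (R : numDomainType) (T : finType) (w f : T -> R) M :
  (forall x, 0 <= w x) -> \sum_x w x = 1 -> (forall x, `|f x| <= M) ->
  `|\sum_x w x * f x| <= M.
Proof.
move=> w_ge0 w_sum1 fM; rewrite -[M]mul1r -w_sum1 mulr_suml.
apply: le_trans (ler_norm_sum _ _ _) _; apply: ler_sum => x _.
by rewrite normrM ger0_norm // ler_wpM2l.
Qed.

Section Bellman.
Variables (R : realType) (N : nat) (S A : finType).
Notation JS := (joint N S).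
Notation JA := (joint N A).
Variables (P : JS -> JA -> JS -> R) (r : JS -> JA -> R) (gamma : R).
Implicit Types (nu : JS -> JA -> R) (v w : JS -> R).

Definition qvalue v s a : R := r s a + gamma * \sum_s' P s a s' * v s'.

Definition bellman nu v s : R := \sum_a nu s a * qvalue v s a.

Definition transition nu s s' : R := \sum_a nu s a * P s a s'.

Definition mean_reward nu s : R := \sum_a nu s a * r s a.

Lemma bellmanE nu v s :
  bellman nu v s = mean_reward nu s + gamma * \sum_s' transition nu s s' * v s'.
Proof.
rewrite /bellman /qvalue /mean_reward.
under eq_bigr do rewrite mulrDr mulrCA mulr_sumr.
rewrite big_split /= -mulr_sumr exchange_big /=; congr (_ + gamma * _).
by apply: eq_bigr => s' _; rewrite mulr_suml; apply: eq_bigr => a _; rewrite mulrA.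
Qed.

Lemma state_distS nu s0 t s' : state_dist P nu s0 t.+1 s' =
  \sum_s state_dist P nu s0 t s * transition nu s s'.
Proof.
by apply: eq_bigr => s _; rewrite mulr_sumr; apply: eq_bigr => a _; rewrite mulrA.
Qed.

Lemma state_distSl nu s0 t s : state_dist P nu s0 t.+1 s =
  \sum_s1 transition nu s0 s1 * state_dist P nu s1 t s.
Proof.
elim: t s => [|t IH] s.
  rewrite state_distS (bigD1 s0) //= eqxx mul1r big1 => [|x /negbTE->]; last first.
    by rewrite mul0r.
  rewrite addr0 (bigD1 s) //= eqxx mulr1 big1 ?addr0 // => x xs.
  by rewrite eq_sym (negbTE xs) mulr0.
rewrite state_distS.
under eq_bigr do rewrite IH mulr_suml.
rewrite exchange_big; apply: eq_bigr => s1 _.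
by rewrite state_distS mulr_sumr; apply: eq_bigr => x _; rewrite mulrA.
Qed.

Lemma exp_rewardE nu s0 t :
  exp_reward P r nu s0 t = \sum_s state_dist P nu s0 t s * mean_reward nu s.
Proof.
by apply: eq_bigr => s _; rewrite mulr_sumr; apply: eq_bigr => a _; rewrite mulrA.
Qed.

Lemma exp_reward0 nu s0 : exp_reward P r nu s0 0 = mean_reward nu s0.
Proof.
rewrite exp_rewardE (bigD1 s0) //= eqxx mul1r big1 ?addr0 // => s /negbTE ->.
by rewrite mul0r.
Qed.

Lemma exp_rewardSl nu s0 t : exp_reward P r nu s0 t.+1 =
  \sum_s1 transition nu s0 s1 * exp_reward P r nu s1 t.
Proof.
rewrite exp_rewardE; under eq_bigr do rewrite state_distSl mulr_suml.
rewrite exchange_big /=; apply: eq_bigr => s1 _.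
by rewrite exp_rewardE mulr_sumr; apply: eq_bigr => s _; rewrite mulrA.
Qed.

Definition discounted_return nu s : R ^nat :=
  series (fun t => gamma ^+ t * exp_reward P r nu s t).

Lemma discounted_returnS nu s n :
  discounted_return nu s n.+1 = bellman nu (discounted_return nu ^~ n) s.
Proof.
rewrite bellmanE /discounted_return /series /= big_nat_recl //.
rewrite expr0 mul1r exp_reward0; congr (_ + _).
under eq_bigr do rewrite exprS exp_rewardSl -mulrA mulr_sumr.
rewrite -mulr_sumr exchange_big; congr (gamma * _); apply: eq_bigr => s1 _.
by rewrite mulr_sumr; apply: eq_bigr => t _; rewrite mulrCA.
Qed.

Definition value nu s : R := limn (discounted_return nu s).

Lemma VfunE nu s : Vfun P r gamma nu s = (1 - gamma) * value nu s.
Proof. by []. Qed.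

Hypothesis gamma_ge0 : 0 <= gamma.
Hypothesis gamma_lt1 : gamma < 1.
Hypothesis P_kernel : is_kernel P.

Lemma cvg_geometric_shift c C : c + C * gamma ^+ n @[n --> \oo] --> c.
Proof.
rewrite -[X in _ --> X]addr0; apply: cvgD; first exact: cvg_cst.
by apply: cvg_geometric; rewrite ger0_norm.
Qed.

Section Policy.
Variable nu : JS -> JA -> R.
Hypothesis nu_policy : is_policy nu.

Lemma transition_ge0 s s' : 0 <= transition nu s s'.
Proof.
by apply: sumr_ge0 => a _; rewrite mulr_ge0 //; [case: nu_policy | case: P_kernel].
Qed.

Lemma sum_transition s : \sum_s' transition nu s s' = 1.
Proof.
rewrite exchange_big -[RHS](proj2 nu_policy s); apply: eq_bigr => a _.
by rewrite -mulr_sumr (proj2 P_kernel) mulr1.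
Qed.

Lemma state_dist_ge0 s0 t s : 0 <= state_dist P nu s0 t s.
Proof.
elim: t s => [|t IH] s; first by rewrite /=; case: eqP.
by rewrite state_distS sumr_ge0 // => x _; rewrite mulr_ge0 ?transition_ge0.
Qed.

Lemma sum_state_dist s0 t : \sum_s state_dist P nu s0 t s = 1.
Proof.
elim: t => [|t IH].
  by rewrite (bigD1 s0) //= eqxx big1 ?addr0 // => s /negbTE ->.
under eq_bigr do rewrite state_distS.
rewrite exchange_big -[RHS]IH; apply: eq_bigr => s _.
by rewrite -mulr_sumr sum_transition mulr1.
Qed.

Definition reward_bound : R := \sum_(p : JS * JA) `|r p.1 p.2|.

Lemma norm_exp_reward_le s0 t : `|exp_reward P r nu s0 t| <= reward_bound.
Proof.
rewrite exp_rewardE; apply: norm_convex_comb_le => [s|//|s].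
- exact: state_dist_ge0.
- exact: sum_state_dist.
apply: norm_convex_comb_le => [a|//|a]; first by case: nu_policy.
- exact: (proj2 nu_policy).
- exact: (norm_le_sum_norm (fun p : JS * JA => r p.1 p.2) (s, a)).
Qed.

Lemma discounted_return_cvg s : cvgn (discounted_return nu s).
Proof.
apply: normed_cvg; rewrite /normed_series_of /=.
apply: (@series_le_cvg R _ (geometric reward_bound gamma)).
- by move=> t.
- by move=> t; rewrite /geometric /= mulr_ge0 ?exprn_ge0 // sumr_ge0.
- move=> t; rewrite /geometric /= normrM ger0_norm ?exprn_ge0 // mulrC.
  by rewrite ler_wpM2r ?exprn_ge0 ?norm_exp_reward_le.
- by apply: is_cvg_geometric_series; rewrite ger0_norm.
Qed.

Lemma bellman_le v w : (forall s, v s <= w s) ->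
  forall s, bellman nu v s <= bellman nu w s.
Proof.
move=> vw s; rewrite !bellmanE lerD2l ler_wpM2l // ler_sum // => s' _.
by rewrite ler_wpM2l ?transition_ge0.
Qed.

Lemma bellmanD_cst v c s :
  bellman nu (fun x => v x + c) s = bellman nu v s + gamma * c.
Proof.
rewrite !bellmanE -addrA -mulrDr; congr (_ + gamma * _).
under eq_bigr do rewrite mulrDr.
by rewrite big_split -mulr_suml sum_transition mul1r.
Qed.

Lemma value_fixpoint s : bellman nu (value nu) s = value nu s.
Proof.
have ret_shift : discounted_return nu s n.+1 @[n --> \oo] --> value nu s.
  by rewrite (cvg_shiftS (discounted_return nu s)); exact: discounted_return_cvg.
have ret_bellman :
    discounted_return nu s n.+1 @[n --> \oo] --> bellman nu (value nu) s.
  rewrite bellmanE; under eq_fun do rewrite discounted_returnS bellmanE.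
  apply: cvgD; first exact: cvg_cst.
  apply: cvgM; first exact: cvg_cst.
  apply: cvg_big => [|s' _]; first exact: add_continuous.
  by apply: cvgM; [exact: cvg_cst | exact: discounted_return_cvg].
exact: (cvg_unique _ ret_bellman ret_shift).
Qed.

Lemma value_le_of_bellman_le v : (forall s, bellman nu v s <= v s) ->
  forall s, value nu s <= v s.
Proof.
move=> Tv_le s; pose C := \sum_x `|v x|.
have ret_le n x : discounted_return nu x n <= v x + C * gamma ^+ n.
  elim: n x => [|n IH] x.
    rewrite /discounted_return /series /= big_geq // expr0 mulr1.
    by have := norm_le_sum_norm v x; rewrite -/C ler_norml => /andP[]; lra.
  rewrite discounted_returnS (le_trans (bellman_le IH x)) //.
  by rewrite bellmanD_cst exprS mulrCA lerD2r.
rewrite -(cvg_lim _ (@cvg_geometric_shift (v s) C)) //.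
apply: ler_lim; [exact: discounted_return_cvg | exact: cvgP (@cvg_geometric_shift _ _) |].
exact: nearW.
Qed.

Lemma value_ge_of_bellman_ge v : (forall s, v s <= bellman nu v s) ->
  forall s, v s <= value nu s.
Proof.
move=> Tv_ge s; pose C := \sum_x `|v x|.
have ret_ge n x : v x + - C * gamma ^+ n <= discounted_return nu x n.
  elim: n x => [|n IH] x.
    rewrite /discounted_return /series /= big_geq // expr0 mulr1.
    by have := norm_le_sum_norm v x; rewrite -/C ler_norml => /andP[]; lra.
  rewrite discounted_returnS (le_trans _ (bellman_le IH x)) //.
  by rewrite bellmanD_cst exprS mulrCA lerD2r.
rewrite -(cvg_lim _ (@cvg_geometric_shift (v s) (- C))) //.
apply: ler_lim; [exact: cvgP (@cvg_geometric_shift _ _) | exact: discounted_return_cvg |].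
exact: nearW.
Qed.

Lemma value_unique v : (forall s, bellman nu v s = v s) ->
  forall s, value nu s = v s.
Proof.
move=> Tv s; apply/eqP; rewrite eq_le.
by rewrite value_le_of_bellman_le ?value_ge_of_bellman_ge // => x; rewrite Tv.
Qed.

End Policy.

Definition deterministic (d : {ffun JS -> JA}) : JS -> JA -> R :=
  fun s a => (a == d s)%:R.

Lemma deterministic_policy d : is_policy (deterministic d).
Proof.
split=> [s a|s]; first by rewrite ler0n.
by rewrite /deterministic (bigD1 (d s)) //= eqxx big1 ?addr0 // => a /negbTE ->.
Qed.

Lemma bellman_deterministic d v s :
  bellman (deterministic d) v s = qvalue v s (d s).
Proof.
rewrite /bellman /deterministic (bigD1 (d s)) //= eqxx mul1r big1 ?addr0 // => a /negbTE ->.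
by rewrite mul0r.
Qed.

Definition bellman_optimal v : Prop :=
  (forall s a, qvalue v s a <= v s) /\ (forall s, exists a, qvalue v s a = v s).

Lemma value_le_of_qvalue_le nu v : is_policy nu ->
  (forall s a, qvalue v s a <= v s) -> forall s, value nu s <= v s.
Proof.
move=> nu_policy v_ge; apply: value_le_of_bellman_le => // s.
rewrite /bellman -[v s]mul1r -(proj2 nu_policy s) mulr_suml ler_sum // => a _.
by rewrite ler_wpM2l //; case: nu_policy.
Qed.

(* The witness is the value of a deterministic policy maximising sum_s V(s):
   switching its action at one state to an action of larger q-value would
   increase every value and strictly increase the one at that state. *)
Lemma exists_bellman_optimal (a0 : A) : exists v, bellman_optimal v.
Proof.
pose F d := \sum_s value (deterministic d) s.
have [d _ d_max] :=
  @arg_maxP _ _ {ffun JS -> JA} [ffun=> [ffun=> a0]] xpredT F isT.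
pose v := value (deterministic d).
have v_fix s : qvalue v s (d s) = v s.
  by rewrite -bellman_deterministic /v (value_fixpoint (deterministic_policy d)).
exists v; split=> [s0 a|s]; last by exists (d s).
rewrite leNgt; apply/negP => v_lt.
pose d' := [ffun s => if s == s0 then a else d s].
have d'_policy := deterministic_policy d'.
have v_le_bellman' s : v s <= bellman (deterministic d') v s.
  rewrite bellman_deterministic ffunE.
  by case: eqP => [->|_]; [exact: ltW | rewrite v_fix].
have v_le_value' := value_ge_of_bellman_ge d'_policy v_le_bellman'.
have v_lt_value' : v s0 < value (deterministic d') s0.
  rewrite -value_fixpoint //; apply: lt_le_trans (bellman_le d'_policy v_le_value' s0).
  by rewrite bellman_deterministic ffunE eqxx.
have : F d < F d'.
  by rewrite /F (bigD1 s0) //= [X in _ < X](bigD1 s0) //= ltr_leD // ler_sum.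
by have /= := d_max d' isT; rewrite leNgt => /negP.
Qed.

Definition greedy v s a : R :=
  (qvalue v s a == v s)%:R / \sum_b (qvalue v s b == v s)%:R.

Section Greedy.
Variable v : JS -> R.
Hypothesis v_attained : forall s, exists a, qvalue v s a = v s.

Lemma greedy_policy : is_policy (greedy v).
Proof.
have count_gt0 s : 0 < \sum_b (qvalue v s b == v s)%:R :> R.
  have [a va] := v_attained s.
  by rewrite (bigD1 a) //= va eqxx ltr_pwDl ?ltr0n // sumr_ge0.
split=> [s a|s]; first by rewrite divr_ge0 ?ler0n ?ltW.
by rewrite -mulr_suml mulfV // gt_eqF.
Qed.

Lemma bellman_greedy s : bellman (greedy v) v s = v s.
Proof.
rewrite -[RHS]mul1r -(proj2 greedy_policy s) mulr_suml; apply: eq_bigr => a _.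
by rewrite /greedy; case: eqP => [->|_]; rewrite ?mul0r.
Qed.

Lemma value_greedy s : value (greedy v) s = v s.
Proof. exact: (value_unique greedy_policy bellman_greedy). Qed.

End Greedy.

Lemma bellman_optimal_unique v w :
  bellman_optimal v -> bellman_optimal w -> forall s, v s = w s.
Proof.
suff le v' w' : bellman_optimal v' -> bellman_optimal w' -> forall s, v' s <= w' s.
  by move=> v_opt w_opt s; apply/eqP; rewrite eq_le !le.
move=> [_ v'_attained] [w'_ge _] s; rewrite -(value_greedy v'_attained).
exact: value_le_of_qvalue_le (greedy_policy v'_attained) w'_ge s.
Qed.


Section Symmetry.
Hypothesis r_pact : forall (k : {perm 'I_N}) s a, r s a = r (pact k s) (pact k a).
Hypothesis P_pact : forall (k : {perm 'I_N}) s a s',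
  P s a s' = P (pact k s) (pact k a) (pact k s').

Lemma qvalue_pact k v s a :
  qvalue v (pact k s) (pact k a) = qvalue (v \o pact k) s a.
Proof.
rewrite /qvalue -r_pact (reindex_inj (can_inj (pactK k))).
by congr (_ + gamma * _); apply: eq_bigr => s' _; rewrite -P_pact.
Qed.

Lemma bellman_optimal_pact k v :
  bellman_optimal v -> bellman_optimal (v \o pact k).
Proof.
case=> v_ge v_attained; split=> [s a|s]; first by rewrite -qvalue_pact v_ge.
have [a va] := v_attained (pact k s).
by exists (pact k^-1 a); rewrite -qvalue_pact pactKV.
Qed.

Lemma bellman_optimal_perm_inv k v s :
  bellman_optimal v -> v (pact k s) = v s.
Proof.
by move=> v_opt; apply: (bellman_optimal_unique (bellman_optimal_pact k v_opt)).
Qed.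

Lemma greedy_perm_inv v :
  (forall k s, v (pact k s) = v s) -> perm_inv_policy (greedy v).
Proof.
move=> v_inv k s a.
have qv_inv s' a' : qvalue v (pact k s') (pact k a') = qvalue v s' a'.
  by rewrite qvalue_pact; congr qvalue; apply/funext => x; exact: v_inv.
rewrite /greedy qv_inv v_inv [in RHS](reindex_inj (can_inj (pactK k))).
by congr (_ / _); apply: eq_bigr => b _; rewrite qv_inv.
Qed.

Lemma bellman_pact nu k v s : perm_inv_policy nu ->
  bellman nu (v \o pact k) s = bellman nu v (pact k s).
Proof.
move=> nu_inv; rewrite /bellman [RHS](reindex_inj (can_inj (pactK k))).
by apply: eq_bigr => a _; rewrite -nu_inv qvalue_pact.
Qed.

Lemma value_pact nu k s : is_policy nu -> perm_inv_policy nu ->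
  value nu (pact k s) = value nu s.
Proof.
move=> nu_policy nu_inv; apply/esym.
apply: (value_unique nu_policy (v := value nu \o pact k)) => x.
by rewrite bellman_pact // value_fixpoint.
Qed.

Lemma Qfun_pact nu k s a : is_policy nu -> perm_inv_policy nu ->
  Qfun P r gamma nu (pact k s) (pact k a) = Qfun P r gamma nu s a.
Proof.
move=> nu_policy nu_inv; rewrite /Qfun (reindex_inj (can_inj (pactK k))).
by apply: eq_bigr => s' _; rewrite -P_pact -r_pact !VfunE value_pact.
Qed.

Lemma exists_optimal_perm_inv_policy (a0 : A) :
  exists nu, optimal_policy P r gamma nu /\ perm_inv_policy nu.
Proof.
have [v [v_ge v_attained]] := exists_bellman_optimal a0.
have v_inv k s := bellman_optimal_perm_inv k s (conj v_ge v_attained).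
exists (greedy v); split; last exact: greedy_perm_inv.
split=> [|nu nu_policy s]; first exact: greedy_policy.
rewrite !VfunE value_greedy // ler_pM2l ?subr_gt0 //.
exact: value_le_of_qvalue_le.
Qed.

End Symmetry.
End Bellman.

Theorem proposition1 (R : realType) (N : nat) (S A : finType) (a0 : A)
  (P : joint N S -> joint N A -> joint N S -> R)
  (r : joint N S -> joint N A -> R) (gamma : R) :
  0 < gamma < 1 ->
  is_kernel P ->
  (forall (k : {perm 'I_N}) (s : joint N S) (a : joint N A),
      r s a = r (pact k s) (pact k a)) ->
  (forall (k : {perm 'I_N}) (s : joint N S) (a : joint N A) (s' : joint N S),
      P s a s' = P (pact k s) (pact k a) (pact k s')) ->
  (exists nu : joint N S -> joint N A -> R,
      optimal_policy P r gamma nu /\ perm_inv_policy nu) /\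
  (forall nu : joint N S -> joint N A -> R,
      is_policy nu -> perm_inv_policy nu ->
      forall (k : {perm 'I_N}) (s : joint N S) (a : joint N A),
        Vfun P r gamma nu s = Vfun P r gamma nu (pact k s) /\
        Qfun P r gamma nu s a = Qfun P r gamma nu (pact k s) (pact k a)).
Proof.
move=> /andP[gamma_gt0 gamma_lt1] P_kernel r_pact P_pact.
have gamma_ge0 := ltW gamma_gt0.
split=> [|nu nu_policy nu_inv k s a].
  exact: exists_optimal_perm_inv_policy.
by rewrite !VfunE !(value_pact, Qfun_pact).
Qed.
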